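(* Let $n\geq 0$ and $0\leq l\leq n$ be integers. Then, as an identity of rational functions in $q,z,x$, \[ \sum_{k=0}^{n}{n\brack k}\frac{(q/z;q)_k (zq^{-l};q)_{n-k}}{1-xq^k}z^k =\frac{(q;q)_n(xz;q)_{n-l}(zq^{-l};q)_l}{(x;q)_{n+1}}. \]
   Context: For $N\geq 0$, $(x;q)_N=(1-x)(1-xq)\cdots(1-xq^{N-1})$ (with $(x;q)_0=1$). The $q$-binomial coefficient is ${n\brack k}=\frac{(q;q)_n}{(q;q)_k(q;q)_{n-k}}$ for $0\leq k\leq n$ and $0$ otherwise. *)

From HB Require Import structures.
From mathcomp Require Import all_boot all_order all_algebra.
Set Implicit Arguments. Unset Strict Implicit. Unset Printing Implicit Defensive.
Import GRing.Theory.
Local Open Scope ring_scope.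

Definition qpoch (F : fieldType) (x q : F) (N : nat) : F :=
  \prod_(i < N) (1 - x * q ^+ i).

Definition qbinom (F : fieldType) (q : F) (n k : nat) : F :=
  if (k <= n)%N then qpoch q q n / (qpoch q q k * qpoch q q (n - k)) else 0.

From HB Require Import structures.
From mathcomp Require Import all_boot all_order all_algebra ring zify.
Import GRing.Theory.
Local Open Scope ring_scope.

(* After multiplication by (x;q)_{n+1}, the right-hand side becomes the polynomial
   p(x) = (q;q)_n (zq^{-l};q)_l (xz;q)_{n-l} of degree at most n, and the claim is
   its partial fraction expansion over the n+1 distinct poles x = q^{-k}.  Such an
   expansion is unique, with coefficients the residues p(q^{-k}) / prod_{j<>k}
   (1 - q^{j-k}); the summands are exactly these residues, by the reflection
   (q/z;q)_k z^k (q^{-k};q)_k = (q;q)_k (zq^{-k};q)_k. *)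

Section LinearProducts.

Variable F : fieldType.

Lemma size_1subZX (a : F) : (size (1 - a *: 'X)%R <= 2)%N.
Proof.
rewrite (leq_trans (size_polyD _ _)) // size_polyN size_poly1 geq_max /=.
by rewrite (leq_trans (size_scale_leq _ _)) // size_polyX.
Qed.

Lemma size_prod_1subZX (I : finType) (P : pred I) (a : I -> F) :
  (size (\prod_(i | P i) (1 - a i *: 'X))%R <= #|P|.+1)%N.
Proof.
apply: leq_trans (size_poly_prod_leq _ _) _.
have : (\sum_(i | P i) size (1 - a i *: 'X)%R <= #|P| * 2)%N.
  by rewrite -sum_nat_const leq_sum // => i _; apply: size_1subZX.
lia.
Qed.

Lemma horner_prod_1subZX (I : finType) (P : pred I) (a : I -> F) y :
  (\prod_(i | P i) (1 - a i *: 'X)).[y] = \prod_(i | P i) (1 - a i * y).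
Proof. by rewrite horner_prod; apply: eq_bigr => i _; rewrite !hornerE. Qed.

End LinearProducts.

Section PartialFractions.

Variables (F : fieldType) (I : finType) (a : I -> F).
Hypotheses (a_inj : injective a) (a_neq0 : forall k, a k != 0).

Lemma partial_fractions (c : I -> F) (p : {poly F}) x :
  (size p <= #|I|)%N ->
  (forall k, c k * \prod_(j | j != k) (1 - a j / a k) = p.[(a k)^-1]) ->
  \prod_k (1 - a k * x) != 0 ->
  \sum_k c k / (1 - a k * x) = p.[x] / \prod_k (1 - a k * x).
Proof.
move=> size_p c_res D_neq0.
pose Q := \sum_k c k *: \prod_(j | j != k) (1 - a j *: 'X).
have hornerQ y : Q.[y] = \sum_k c k * \prod_(j | j != k) (1 - a j * y).
  by rewrite horner_sum; apply: eq_bigr => k _; rewrite hornerZ horner_prod_1subZX.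
have Q_node k : Q.[(a k)^-1] = p.[(a k)^-1].
  rewrite hornerQ (bigD1 k) //= [X in _ + X]big1 ?addr0 ?c_res // => j jk.
  by rewrite (bigD1 k) 1?eq_sym //= mulfV // subrr mul0r mulr0.
have size_Q : (size Q <= #|I|)%N.
  rewrite (leq_trans (size_sum _ _ _)) //; apply/bigmax_leqP => k _.
  rewrite (leq_trans (size_scale_leq _ _)) // (leq_trans (size_prod_1subZX _ _ _ _)) //.
  by rewrite cardC1 ltn_predL; apply/card_gt0P; exists k.
have -> : p = Q.
  apply/eqP; rewrite -subr_eq0; apply/eqP.
  apply: (@roots_geq_poly_eq0 _ _ [seq (a k)^-1 | k <- enum I]).
  - by apply/allP => _ /mapP[k _ ->]; rewrite rootE hornerD hornerN Q_node subrr.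
  - by rewrite map_inj_uniq ?enum_uniq // => j k /invr_inj /a_inj.
  - rewrite size_map -cardE (leq_trans (size_polyD _ _)) // size_polyN.
    by rewrite geq_max size_p size_Q.
rewrite hornerQ mulr_suml; apply: eq_bigr => k _.
move: D_neq0; rewrite (bigD1 k) //= mulf_eq0 negb_or => /andP[_ dk_neq0].
by rewrite invfM mulrA mulrAC mulfK.
Qed.

End PartialFractions.

Section QPochhammer.

Variable F : fieldType.
Implicit Types a q z : F.

Lemma qpochD a q m k : qpoch a q (m + k) = qpoch a q m * qpoch (a * q ^+ m) q k.
Proof.
rewrite /qpoch big_split_ord /=; congr (_ * _).
by apply: eq_bigr => i _; rewrite exprD mulrA.
Qed.

Lemma qpoch_split a q m N :
  (m <= N)%N -> qpoch a q N = qpoch a q m * qpoch (a * q ^+ m) q (N - m).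
Proof. by move=> le_mN; rewrite -qpochD subnKC. Qed.

Lemma qpoch_neq0_le a q m N : (m <= N)%N -> qpoch a q N != 0 -> qpoch a q m != 0.
Proof. by move=> /(qpoch_split a q) ->; rewrite mulf_eq0 negb_or => /andP[]. Qed.

Lemma qbinomK q n m : (m <= n)%N -> qpoch q q n != 0 ->
  qbinom q n m * (qpoch q q m * qpoch q q (n - m)) = qpoch q q n.
Proof.
move=> le_mn Qn_neq0; rewrite /qbinom le_mn divfK // mulf_neq0 //.
  exact: qpoch_neq0_le Qn_neq0.
exact: qpoch_neq0_le (leq_subr m n) Qn_neq0.
Qed.

Lemma expr_neq1 q n d : (0 < d <= n)%N -> qpoch q q n != 0 -> q ^+ d != 1.
Proof.
case/andP=> d_gt0 le_dn; apply: contraNneq => qd1.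
have lt_d'n : (d.-1 < n)%N by rewrite prednK.
by rewrite /qpoch (bigD1 (Ordinal lt_d'n)) //= -exprS prednK // qd1 subrr mul0r.
Qed.

Variable q : F.
Hypothesis q_neq0 : q != 0.

Lemma expr_ord_inj n : qpoch q q n != 0 -> injective (fun k : 'I_n.+1 => q ^+ k).
Proof.
move=> Qn_neq0.
have neq_expr i j : (i < j)%N -> (j < n.+1)%N -> q ^+ i != q ^+ j.
  move=> lt_ij lt_jn; rewrite -(subnKC (ltnW lt_ij)) exprD -{1}[q ^+ i]mulr1.
  rewrite (inj_eq (mulfI (expf_neq0 i q_neq0))) eq_sym.
  by apply: expr_neq1 Qn_neq0; rewrite subn_gt0 lt_ij (leq_trans (leq_subr _ _)).
move=> i j /= /eqP eq_ij; apply: val_inj => /=.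
case: (ltngtP i j) eq_ij => // [lt_ij | lt_ji].
  by rewrite (negPf (neq_expr _ _ lt_ij (ltn_ord j))).
by rewrite eq_sym (negPf (neq_expr _ _ lt_ji (ltn_ord i))).
Qed.

Lemma mul_exprVn_expr c m l : (m <= l)%N -> c * q ^- l * q ^+ (l - m) = c * q ^- m.
Proof.
move=> le_ml; rewrite -{1}(subnKC le_ml) exprD invfM -!mulrA; congr (_ * _).
by rewrite mulVf ?mulr1 // expf_neq0.
Qed.

Lemma qpoch_exchange z n m l : (m <= n)%N -> (l <= n)%N ->
  qpoch (z * q ^- m) q m * qpoch (z * q ^- l) q (n - m)
  = qpoch (z * q ^- l) q l * qpoch (z * q ^- m) q (n - l).
Proof.
wlog le_ml : m l / (m <= l)%N => [wlog_le | le_mn le_ln].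
  by case: (leqP m l) => [|/ltnW] ? ? ?; [apply: wlog_le | symmetry; apply: wlog_le].
rewrite (qpoch_split (z * q ^- l) q (l - m) (n - m)) ?leq_sub2r //.
rewrite (qpoch_split (z * q ^- l) q (l - m) l) ?leq_subr // !mul_exprVn_expr //.
have -> : (n - m - (l - m) = n - l)%N by lia.
have -> : (l - (l - m) = m)%N by lia.
ring.
Qed.

Lemma qpoch_exprVn c m : qpoch (c * q ^- m) q m = \prod_(i < m) (1 - c * q ^- i.+1).
Proof.
rewrite /qpoch -(big_mkord xpredT (fun i => 1 - c * q ^- i.+1)) big_rev_mkord subn0.
apply: eq_bigr => i _; rewrite -subSn ?ltn_ord // subSS.
by rewrite -(mul_exprVn_expr _ _ _ (leq_subr i m)) subKn // ltnW.
Qed.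

Lemma qpoch_inversion z m : z != 0 ->
  qpoch (q / z) q m * z ^+ m * qpoch (q ^- m) q m
  = qpoch q q m * qpoch (z * q ^- m) q m.
Proof.
move=> z_neq0; have := qpoch_exprVn 1 m; rewrite mul1r => ->.
rewrite qpoch_exprVn -[in z ^+ m](card_ord m) -prodr_const.
rewrite /qpoch -!big_split /=; apply: eq_bigr => i _.
by rewrite exprS; field; rewrite expf_neq0 ?q_neq0 ?z_neq0.
Qed.

Lemma prod_1sub_expr_div n (k : 'I_n.+1) :
  \prod_(j | j != k) (1 - q ^+ j / q ^+ k) = qpoch (q ^- k) q k * qpoch q q (n - k).
Proof.
rewrite big_mkcond /=.
rewrite -(big_mkord xpredT (fun j => if j != k then 1 - q ^+ j / q ^+ k else 1)).
rewrite (big_cat_nat (leq0n k)) ?(ltnW (ltn_ord k)) //=.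
rewrite [X in _ * X]big_ltn ?ltn_ord // eqxx mul1r.
rewrite /qpoch; congr (_ * _).
  by rewrite big_mkord; apply: eq_bigr => i _; rewrite (ltn_eqF (ltn_ord i)) mulrC.
rewrite -{1}[k.+1]add0n big_addn subSS big_mkord; apply: eq_bigr => i _.
rewrite addnS gtn_eqF ?ltnS ?leq_addl //.
by rewrite exprS exprD !mulrA mulfK ?expf_neq0.
Qed.

Lemma qbinom_residue z n l (k : 'I_n.+1) : z != 0 -> qpoch q q n != 0 -> (l <= n)%N ->
  qbinom q n k * (qpoch (q / z) q k * qpoch (z * q ^- l) q (n - k)) * z ^+ k
    * \prod_(j | j != k) (1 - q ^+ j / q ^+ k)
  = qpoch q q n * qpoch (z * q ^- k) q (n - l) * qpoch (z * q ^- l) q l.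
Proof.
move=> z_neq0 Qn_neq0 le_ln; have le_kn : (k <= n)%N by rewrite -ltnS.
rewrite prod_1sub_expr_div -(qbinomK q n k le_kn Qn_neq0) -[RHS]mulrA.
rewrite (mulrC (qpoch _ q (n - l))) -qpoch_exchange //.
transitivity (qbinom q n k * qpoch (z * q ^- l) q (n - k) * qpoch q q (n - k)
              * (qpoch (q / z) q k * z ^+ k * qpoch (q ^- k) q k)); first ring.
by rewrite qpoch_inversion //; ring.
Qed.

End QPochhammer.

Theorem lemma2p1 (F : fieldType) (n l : nat) (q z x : F)
  (hl : (l <= n)%N)
  (hq : q != 0) (hz : z != 0)
  (hqq : qpoch q q n != 0)
  (hx : qpoch x q n.+1 != 0) :
  \sum_(0 <= k < n.+1)
     qbinom q n k * (qpoch (q / z) q k * qpoch (z * q ^- l) q (n - k))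
       / (1 - x * q ^+ k) * z ^+ k
  = qpoch q q n * qpoch (x * z) q (n - l) * qpoch (z * q ^- l) q l
      / qpoch x q n.+1.
Proof.
pose p : {poly F} := (qpoch q q n * qpoch (z * q ^- l) q l)
                       *: \prod_(i < n - l) (1 - (z * q ^+ i) *: 'X).
have horner_p y :
    p.[y] = qpoch q q n * qpoch (y * z) q (n - l) * qpoch (z * q ^- l) q l.
  rewrite hornerZ horner_prod_1subZX mulrAC; congr (_ * _ * _).
  by apply: eq_bigr => i _; rewrite [z * _ * y]mulrC mulrA.
have size_p : (size p <= #|'I_n.+1|)%N.
  rewrite card_ord (leq_trans (size_scale_leq _ _)) //.
  rewrite (leq_trans (size_prod_1subZX _ _ _ _)) // ltnS.
  by rewrite (leq_trans (max_card _)) // card_ord leq_subr.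
have qpochE : qpoch x q n.+1 = \prod_(k < n.+1) (1 - q ^+ k * x).
  by apply: eq_bigr => k _; rewrite mulrC.
pose c k := qbinom q n k * (qpoch (q / z) q k * qpoch (z * q ^- l) q (n - k)) * z ^+ k.
rewrite big_mkord (eq_bigr (fun k : 'I_n.+1 => c k / (1 - q ^+ k * x))); last first.
  by move=> k _; rewrite /c mulrAC [x * _]mulrC.
rewrite -horner_p qpochE; apply: (@partial_fractions F _ (fun k : 'I_n.+1 => q ^+ k)).
- exact: expr_ord_inj.
- by move=> k; apply: expf_neq0.
- exact: size_p.
- by move=> k; rewrite horner_p [_^-1 * z]mulrC qbinom_residue.
- by rewrite -qpochE.
Qed.
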